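(* In the noisy search problem with $1/\delta=2^L$ using the $dyaPM$ strategy described in the context, for every level $l<L$ the nested log-likelihood $U^{\{l\}}(t)$ is a submartingale; more precisely, for all $t>0$, $$\mathbb{E}[U^{\{l\}}(t+1)\mid\pi(t)]-U^{\{l\}}(t)\ge K_d:=\min\Big\{\min_{\rho\in[0,1/4]}\max\{f(\rho),g(\rho)\},\ \min_{\rho\in[1/4,1/2]}f(\rho),\ \tfrac14 D\big(\tfrac14 B_1+\tfrac34 B_0\,\|\,B_0\big)\Big\}>0,$$ where $B_1=\mathrm{Bern}(1-p[1/2])$, $B_0=\mathrm{Bern}(p[1/2])$, $f(\rho)=\rho\,D\big(B_1\,\|\,\tfrac34B_1+\tfrac14B_0\big)$, and $g(\rho)=(\tfrac12-\rho)\,D\big((1-4\rho)B_1+4\rho B_0\,\|\,(\tfrac12+\rho)B_1+(\tfrac12-\rho)B_0\big)$.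
   Context: Search problem: fix $\delta\in(0,1)$ with $N=1/\delta=2^L$, $L$ an integer. A target index $\theta$ is uniform on $\{1,\dots,N\}$. A noise profile $p:(0,1)\to(0,1/2)$ is continuous and non-decreasing; $p[x]:=p(x)$. At each time $t$ a query set $S_t$ is chosen from the past and one observes $Y_t=\mathbb{1}(\theta\in S_t)\oplus Z_t$ with, conditionally on $S_t$, $Z_t\sim\mathrm{Bern}(p[\delta|S_t|])$ conditionally i.i.d. across time. Posterior $\pi_i(t)=\mathbb{P}(\theta=i\mid S_1^t,Y_1^t)$, $\pi_i(0)=\delta$; $\pi_S=\sum_{i\in S}\pi_i$, $\pi_{[a,b]}=\sum_{i=a}^b\pi_i$. $dyaPM$: $H_l^m=\{m2^{L-l}+1,\dots,(m+1)2^{L-l}\}$ for $l=0,\dots,L$, $m=0,\dots,2^l-1$. At time $t$, $l^*_t$ is the largest $l$ with $\max_m\pi_{H_l^m}(t)\ge\tfrac12$, $m^*_t=\arg\max_m\pi_{H^m_{l^*_t}}(t)$, $d=m^*_t2^{L-l^*_t}+1$, $k^*=\arg\min_k|\pi_{[d,k]}(t)-\tfrac12|$, and $S_{t+1}=\{d,\dots,k^*\}$. Nested log-likelihood: for $q=1,\dots,2^l$, $\mathrm{bin}(q)=\{(q-1)2^{L-l}+1,\dots,q2^{L-l}\}$, $\pi^{\{l\}}_q(t)=\sum_{i\in\mathrm{bin}(q)}\pi_i(t)$, $U^{\{l\}}(t)=\sum_{q=1}^{2^l}\pi^{\{l\}}_q(t)\log\frac{\pi^{\{l\}}_q(t)}{1-\pi^{\{l\}}_q(t)}$.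 $D(\cdot\|\cdot)$ is KL divergence; convex combinations of Bernoulli distributions denote mixtures. *)

From HB Require Import structures.
From mathcomp Require Import all_boot all_order all_algebra.
From mathcomp Require Import boolp classical_sets reals topology normedtype exp.
Set Implicit Arguments. Unset Strict Implicit. Unset Printing Implicit Defensive.
Import Order.TTheory GRing.Theory Num.Theory.
Local Open Scope ring_scope.

(* Indices are 0-based: item i (0 <= i < N) here is item i+1 of the paper.
   A posterior is a function pi : nat -> R (only 0 <= i < N = 2^L matters). *)

Section Search.
Variable R : realType.

Definition NN (L : nat) : nat := (2 ^ L)%N.
Definition delta (L : nat) : R := (NN L)%:R^-1.

Definition mass (pi : nat -> R) (a b : nat) : R := \sum_(a <= i < b) pi i.

Definition massH (L : nat) (pi : nat -> R) (l m : nat) : R :=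
  mass pi (m * 2 ^ (L - l))%N (m.+1 * 2 ^ (L - l))%N.

Definition lstar (L : nat) (pi : nat -> R) : nat :=
  \max_(l < L.+1 | [exists m : 'I_(2 ^ l), 2^-1 <= massH L pi l m]) (l : nat).

(* m*_t : argmax_m pi_{H_{l*}^m}; ties broken towards the smallest m *)
Definition mstar (L : nat) (pi : nat -> R) : nat :=
  let l := lstar L pi in
  find (fun m => [forall m' : 'I_(2 ^ l), massH L pi l m' <= massH L pi l m])
       (iota 0 (2 ^ l)).

Definition dstart (L : nat) (pi : nat -> R) : nat :=
  (mstar L pi * 2 ^ (L - lstar L pi))%N.

(* k* : argmin_{k >= d} | pi_{[d,k]} - 1/2 |, ties broken towards smallest k *)
Definition kstar (L : nat) (pi : nat -> R) : nat :=
  let d := dstart L pi in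
  let c k := `|mass pi d k.+1 - 2^-1| in
  (d + find (fun k => [forall k' : 'I_(NN L), (d <= k')%N ==> (c k <= c k')%R])
            (iota d (NN L - d)))%N.

Definition inS (L : nat) (pi : nat -> R) (i : nat) : bool :=
  (dstart L pi <= i <= kstar L pi)%N.
Definition sizeS (L : nat) (pi : nat -> R) : nat := (kstar L pi).+1 - dstart L pi.

(* P(Y = y | theta = i) for the dyaPM query: Y = 1(theta in S) xor Z,
   Z ~ Bern(p[delta |S|]) *)
Definition lik (p : R -> R) (L : nat) (pi : nat -> R) (y : bool) (i : nat) : R :=
  let q := p (delta L * (sizeS L pi)%:R) in
  if y == inS L pi i then 1 - q else q.

Definition predY (p : R -> R) (L : nat) (pi : nat -> R) (y : bool) : R :=
  \sum_(0 <= j < NN L) pi j * lik p L pi y j.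

Definition update (p : R -> R) (L : nat) (pi : nat -> R) (y : bool) : nat -> R :=
  fun i => pi i * lik p L pi y i / predY p L pi y.

Definition prior (L : nat) : nat -> R := fun _ => delta L.

Definition posterior (p : R -> R) (L : nat) (ys : seq bool) : nat -> R :=
  foldl (update p L) (prior L) ys.

Definition binmass (L : nat) (pi : nat -> R) (l q : nat) : R := massH L pi l q.
Definition Unest (L l : nat) (pi : nat -> R) : R :=
  \sum_(0 <= q < 2 ^ l) binmass L pi l q * ln (binmass L pi l q / (1 - binmass L pi l q)).

Definition EnextU (p : R -> R) (L l : nat) (pi : nat -> R) : R :=
  \sum_(y : bool) predY p L pi y * Unest L l (update p L pi y).

Definition klB (a b : R) : R :=
  a * ln (a / b) + (1 - a) * ln ((1 - a) / (1 - b)).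

(* parameter of the mixture lam B1 + (1 - lam) B0, B1 = Bern(1 - a), B0 = Bern(a) *)
Definition mixp (a lam : R) : R := lam * (1 - a) + (1 - lam) * a.

Definition fK (p : R -> R) (rho : R) : R :=
  let a := p 2^-1 in rho * klB (1 - a) (mixp a (3/4)).
Definition gK (p : R -> R) (rho : R) : R :=
  let a := p 2^-1 in
  (2^-1 - rho) * klB (mixp a (1 - 4 * rho)) (mixp a (2^-1 + rho)).

Definition Kd (p : R -> R) : R :=
  let a := p 2^-1 in
  Num.min (inf [set x | exists2 rho, 0 <= rho <= 4^-1 & x = Num.max (fK p rho) (gK p rho)])
    (Num.min (inf [set x | exists2 rho, 4^-1 <= rho <= 2^-1 & x = fK p rho])
             (4^-1 * klB (mixp a (4^-1)) a)).

End Search.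

(* Write B_lam := lam Bern(1 - a) + (1 - lam) Bern(a), a = p[delta |S|], for the law of the
   answer when the query S covers a fraction lam of the posterior mass of some set.  For a bin
   of mass b containing mass u of S, Bayes' rule gives exactly
     E[its term of U^{l}(t+1) | pi(t)] - (its term at t) = b D(B_{u/b} || B_{(pi_S - u)/(1 - b)}),
   so the drift is a sum of nonnegative divergences.  The dyaPM rule puts S inside the block
   H_{l*}^{m*} of mass >= 1/2 and makes 1/4 <= pi_S <= 3/4.  If l <= l*, the bin containing that
   block contributes at least D(B_{1/4} || B_0) / 4.  If l > l*, S starts on a bin boundary, so
   every bin except the one holding the end of S lies wholly inside or outside S; these bins
   carry mass > 1/2 and each contributes at least b D(B_1 || B_{3/4}).  Joint convexity of D
   moves the mixture weights to these extreme values, and replaces a by p[1/2] >= a. *)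
From HB Require Import structures.
From mathcomp Require Import all_boot all_order all_algebra.
From mathcomp Require Import boolp classical_sets reals topology normedtype exp.
From mathcomp Require Import ring lra zify.
Import Order.TTheory GRing.Theory Num.Theory numFieldNormedType.Exports.
Set Implicit Arguments. Unset Strict Implicit. Unset Printing Implicit Defensive.
Local Open Scope ring_scope.
Local Open Scope classical_set_scope.

Section BernoulliDivergence.
Variable R : realType.
Implicit Types a b u v w t lam : R.

Lemma ln_le_subr1 w : 0 < w -> ln w <= w - 1.
Proof.
move=> w0; have := @le_ln1Dx R (w - 1); rewrite subrKC; apply; lra.
Qed.

Lemma ln_lt_subr1 w : 0 < w -> w != 1 -> ln w < w - 1.
Proof.
move=> w0 w1; have := @expR_gt1Dx R (ln w).
by rewrite ln_eq0 // lnK ?posrE // => /(_ w1); lra.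
Qed.

Definition klterm u v : R := u * ln (u / v).

Lemma klterm0 v : klterm 0 v = 0.
Proof. by rewrite /klterm mul0r. Qed.

Lemma klterm_ge_tangent lam u v : 0 < lam -> 0 <= u -> 0 < v ->
  u * ln lam + u - lam * v <= klterm u v.
Proof.
move=> lam0 u0 v0; have lv0 := mulr_gt0 lam0 v0.
have [->|/negPf u_neq0] := eqVneq u 0; first by rewrite klterm0 !mul0r; lra.
have up : 0 < u by rewrite lt0r u_neq0.
have := ln_le_subr1 (divr_gt0 lv0 up).
rewrite /klterm !ln_div ?lnM ?posrE // => H.
have E : u * (lam * v / u) = lam * v by field; rewrite u_neq0.
nra.
Qed.

Lemma klterm_ge_sub u v : 0 <= u -> 0 < v -> u - v <= klterm u v.
Proof. by move=> u0 v0; have := klterm_ge_tangent ltr01 u0 v0; rewrite ln1; lra. Qed.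

Lemma klterm_gt_sub u v : 0 < u -> 0 < v -> u != v -> u - v < klterm u v.
Proof.
move=> u0 v0 uv; have vu1 : v / u != 1.
  by apply: contra_neq uv => E; rewrite -(divfK (lt0r_neq0 u0) v) E mul1r.
have := ln_lt_subr1 (divr_gt0 v0 u0) vu1.
rewrite /klterm !ln_div ?posrE // => H.
have E : u * (v / u) = v by field; rewrite gt_eqF.
nra.
Qed.

Lemma log_sum_le a1 a2 b1 b2 : 0 <= a1 -> 0 <= a2 -> 0 < b1 -> 0 < b2 ->
  klterm (a1 + a2) (b1 + b2) <= klterm a1 b1 + klterm a2 b2.
Proof.
move=> a10 a20 b10 b20.
have [A0|/negPf A_neq0] := eqVneq (a1 + a2) 0.
  have [-> ->] : a1 = 0 /\ a2 = 0 by split; lra.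
  by rewrite addr0 !klterm0 addr0.
have A_gt0 : 0 < a1 + a2 by rewrite lt0r A_neq0 addr_ge0.
have lam0 := divr_gt0 A_gt0 (addr_gt0 b10 b20).
rewrite {1}/klterm; set lam := (a1 + a2) / (b1 + b2) in lam0 *.
have h1 := klterm_ge_tangent lam0 a10 b10; have h2 := klterm_ge_tangent lam0 a20 b20.
have E : lam * b1 + lam * b2 = a1 + a2 by rewrite /lam; field; rewrite gt_eqF // addr_gt0.
lra.
Qed.

Lemma klterm_mul2 t u v : 0 < t -> 0 < v -> klterm (t * u) (t * v) = t * klterm u v.
Proof.
move=> t0 v0; rewrite /klterm mulrA.
by congr (_ * ln _); field; rewrite !gt_eqF.
Qed.

Lemma klBE a b : klB a b = klterm a b + klterm (1 - a) (1 - b).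
Proof. by []. Qed.

Lemma klB_ge0 a b : 0 <= a <= 1 -> 0 < b < 1 -> 0 <= klB a b.
Proof.
move=> /andP[a0 a1] /andP[b0 b1]; rewrite klBE.
have := klterm_ge_sub a0 b0.
have : (1 - a) - (1 - b) <= klterm (1 - a) (1 - b) by apply: klterm_ge_sub; lra.
lra.
Qed.

Lemma klB_gt0 a b : 0 <= a <= 1 -> 0 < b < 1 -> a != b -> 0 < klB a b.
Proof.
move=> /andP[a0 a1] /andP[b0 b1] ab; rewrite klBE.
have [a_eq0|a_neq0] := eqVneq a 0.
  have := klterm_ge_sub a0 b0.
  have : (1 - a) - (1 - b) < klterm (1 - a) (1 - b).
    by apply: klterm_gt_sub; [lra | lra | apply/eqP; lra].
  lra.
have a_gt0 : 0 < a by rewrite lt0r a_neq0.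
have := klterm_gt_sub a_gt0 b0 ab.
have : (1 - a) - (1 - b) <= klterm (1 - a) (1 - b) by apply: klterm_ge_sub; lra.
lra.
Qed.

Lemma klB_xx a : klB a a = 0.
Proof.
rewrite klBE /klterm.
have [->|a_neq0] := eqVneq a 0; first by rewrite mul0r subr0 divff ?oner_eq0 // ln1 mulr0 addr0.
have [->|a_neq1] := eqVneq (1 - a) 0; first by rewrite mul0r divff // ln1 mulr0 addr0.
by rewrite !divff // ln1 !mulr0 addr0.
Qed.

Lemma klB_compl a b : klB (1 - a) (1 - b) = klB a b.
Proof. by rewrite !klBE !subKr addrC. Qed.

Lemma klB_convex t a1 a2 b1 b2 : 0 <= t <= 1 -> 0 <= a1 <= 1 -> 0 <= a2 <= 1 ->
  0 < b1 < 1 -> 0 < b2 < 1 ->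
  klB (t * a1 + (1 - t) * a2) (t * b1 + (1 - t) * b2) <= t * klB a1 b1 + (1 - t) * klB a2 b2.
Proof.
move=> /andP[t0 t1] /andP[a10 a11] /andP[a20 a21] /andP[b10 b11] /andP[b20 b21].
have [->|t_neq0] := eqVneq t 0; first by rewrite !mul0r !add0r subr0 !mul1r.
have [->|t_neq1] := eqVneq t 1; first by rewrite subrr !mul0r !addr0 !mul1r.
have tp : 0 < t by rewrite lt0r t_neq0.
have tq : 0 < 1 - t by rewrite subr_gt0 lt_neqAle t_neq1.
rewrite !klBE.
have -> : 1 - (t * a1 + (1 - t) * a2) = t * (1 - a1) + (1 - t) * (1 - a2) by ring.
have -> : 1 - (t * b1 + (1 - t) * b2) = t * (1 - b1) + (1 - t) * (1 - b2) by ring.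
have h1 := log_sum_le (mulr_ge0 (ltW tp) a10) (mulr_ge0 (ltW tq) a20)
  (mulr_gt0 tp b10) (mulr_gt0 tq b20).
have h2 : klterm (t * (1 - a1) + (1 - t) * (1 - a2)) (t * (1 - b1) + (1 - t) * (1 - b2))
    <= klterm (t * (1 - a1)) (t * (1 - b1)) + klterm ((1 - t) * (1 - a2)) ((1 - t) * (1 - b2)).
  by apply: log_sum_le; apply: mulr_ge0 || apply: mulr_gt0; lra.
rewrite !klterm_mul2 // in h1 h2; lra.
Qed.

End BernoulliDivergence.

Section Mixtures.
Variable R : realType.
Implicit Types a A l t : R.

Definition klmix a l1 l2 : R := klB (mixp a l1) (mixp a l2).

Lemma mixp0 a : mixp a 0 = a.
Proof. by rewrite /mixp; ring. Qed.

Lemma mixp1 a : mixp a 1 = 1 - a.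
Proof. by rewrite /mixp; ring. Qed.

Lemma mixp_compl a l : mixp a (1 - l) = 1 - mixp a l.
Proof. by rewrite /mixp; ring. Qed.

Lemma mixp_affine a t l1 l2 :
  mixp a (t * l1 + (1 - t) * l2) = t * mixp a l1 + (1 - t) * mixp a l2.
Proof. by rewrite /mixp; ring. Qed.

Lemma mixp_bounds a l : 0 < a < 1 -> 0 <= l <= 1 -> 0 < mixp a l < 1.
Proof.
move=> /andP[a0 a1] /andP[l0 l1]; rewrite /mixp.
have : 0 <= l * (1 - a) by apply: mulr_ge0; lra.
have : 0 <= (1 - l) * a by apply: mulr_ge0; lra.
have : l * (1 - a) + (1 - l) * a = a + l * (1 - 2 * a) by ring.
move=> *; apply/andP; split; nra.
Qed.

Lemma mixp_boundsW a l : 0 < a < 1 -> 0 <= l <= 1 -> 0 <= mixp a l <= 1.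
Proof. by move=> ha hl; have /andP[? ?] := mixp_bounds ha hl; rewrite !ltW. Qed.

Lemma klmix_ge0 a l1 l2 : 0 < a < 1 -> 0 <= l1 <= 1 -> 0 <= l2 <= 1 -> 0 <= klmix a l1 l2.
Proof. by move=> ha h1 h2; apply: klB_ge0; [apply: mixp_boundsW | apply: mixp_bounds]. Qed.

Lemma klmix_gt0 a l1 l2 : 0 < a < 2^-1 -> 0 <= l1 <= 1 -> 0 <= l2 <= 1 -> l1 != l2 ->
  0 < klmix a l1 l2.
Proof.
move=> /andP[a0 a2] h1 h2 l12.
have ha : 0 < a < 1 by apply/andP; split; lra.
apply: klB_gt0; [exact: mixp_boundsW | exact: mixp_bounds |].
apply: contra_neq l12; rewrite /mixp => E.
have : (l1 - l2) * (1 - 2 * a) = 0 by lra.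
by move/eqP; rewrite mulf_eq0 subr_eq0 => /orP[/eqP //|]; lra.
Qed.

Lemma klmix_shrinkr a t l1 l2 : 0 < a < 1 -> 0 <= t <= 1 -> 0 <= l1 <= 1 -> 0 <= l2 <= 1 ->
  klmix a l1 (t * l1 + (1 - t) * l2) <= klmix a l1 l2.
Proof.
move=> ha ht h1 h2; rewrite /klmix mixp_affine.
rewrite [X in klB X _](_ : _ = t * mixp a l1 + (1 - t) * mixp a l1); last by ring.
have := klB_convex ht (mixp_boundsW ha h1) (mixp_boundsW ha h1) (mixp_bounds ha h1)
  (mixp_bounds ha h2).
have := klmix_ge0 ha h1 h2; rewrite /klmix klB_xx.
move: ht => /andP[t0 t1]; nra.
Qed.

Lemma klmix_shrinkl a t l1 l2 : 0 < a < 1 -> 0 <= t <= 1 -> 0 <= l1 <= 1 -> 0 <= l2 <= 1 ->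
  klmix a (t * l1 + (1 - t) * l2) l2 <= klmix a l1 l2.
Proof.
move=> ha ht h1 h2; rewrite /klmix mixp_affine.
rewrite [X in klB _ X](_ : _ = t * mixp a l2 + (1 - t) * mixp a l2); last by ring.
have := klB_convex ht (mixp_boundsW ha h1) (mixp_boundsW ha h2) (mixp_bounds ha h2)
  (mixp_bounds ha h2).
have := klmix_ge0 ha h1 h2; rewrite /klmix klB_xx.
move: ht => /andP[t0 t1]; nra.
Qed.

(* Data processing: Bern-mixtures with noise A are those with noise a passed through a
   further binary symmetric channel with crossover (A - a) / (1 - 2a). *)
Lemma klmix_noise a A l1 l2 : 0 < a -> a <= A -> A < 2^-1 -> 0 <= l1 <= 1 -> 0 <= l2 <= 1 ->
  klmix A l1 l2 <= klmix a l1 l2.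
Proof.
move=> a0 aA A2 h1 h2.
have ha : 0 < a < 1 by apply/andP; split; lra.
set c := (A - a) / (1 - 2 * a).
have c0 : 0 <= c by apply: divr_ge0; lra.
have c1 : c <= 1 by rewrite /c ler_pdivrMr; lra.
have c01 : 0 <= 1 - c <= 1 by apply/andP; split; lra.
have E l : mixp A l = (1 - c) * mixp a l + (1 - (1 - c)) * (1 - mixp a l).
  by rewrite /c /mixp; field; lra.
have m1 := mixp_boundsW ha h1; have m2 := mixp_bounds ha h2.
have m1' : 0 <= 1 - mixp a l1 <= 1 by move: m1 => /andP[? ?]; apply/andP; split; lra.
have m2' : 0 < 1 - mixp a l2 < 1 by move: m2 => /andP[? ?]; apply/andP; split; lra.
rewrite /klmix !E; apply: (le_trans (klB_convex c01 m1 m1' m2 m2')).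
rewrite klB_compl; lra.
Qed.

Lemma klmix_1_ge a A t : 0 < a -> a <= A -> A < 2^-1 -> 0 <= t <= 3/4 ->
  klmix A 1 (3/4) <= klmix a 1 t.
Proof.
move=> a0 aA A2 /andP[t0 t1].
have ha : 0 < a < 1 by apply/andP; split; lra.
have h01 : 0 <= (1 : R) <= 1 by rewrite ler01 lexx.
have h34 : 0 <= (3/4 : R) <= 1 by apply/andP; split; lra.
apply: (le_trans (klmix_noise a0 aA A2 h01 h34)).
set th := (3/4 - t) / (1 - t).
have E : th * 1 + (1 - th) * t = 3/4 by rewrite /th; field; lra.
have ht : 0 <= th <= 1.
  by apply/andP; split; [apply: divr_ge0 | rewrite /th ler_pdivrMr]; lra.
by rewrite -{1}E; apply: klmix_shrinkr => //; apply/andP; split; lra.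
Qed.

Lemma klmix_0_ge a A t : 0 < a -> a <= A -> A < 2^-1 -> 4^-1 <= t <= 1 ->
  klmix A 1 (3/4) <= klmix a 0 t.
Proof.
move=> a0 aA A2 /andP[t0 t1].
have -> : klmix a 0 t = klmix a 1 (1 - t).
  by rewrite /klmix -klB_compl -!mixp_compl subr0.
by apply: klmix_1_ge => //; apply/andP; split; lra.
Qed.

Lemma klmix_r0_ge a A s : 0 < a -> a <= A -> A < 2^-1 -> 4^-1 <= s <= 1 ->
  klmix A 4^-1 0 <= klmix a s 0.
Proof.
move=> a0 aA A2 /andP[s0 s1].
have ha : 0 < a < 1 by apply/andP; split; lra.
have h0 : 0 <= (0 : R) <= 1 by rewrite lexx ler01.
have h4 : 0 <= (4^-1 : R) <= 1 by apply/andP; split; lra.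
apply: (le_trans (klmix_noise a0 aA A2 h4 h0)).
set th := 4^-1 / s.
have E : th * s + (1 - th) * 0 = 4^-1 by rewrite /th; field; lra.
have ht : 0 <= th <= 1.
  by apply/andP; split; [apply: divr_ge0 | rewrite /th ler_pdivrMr]; lra.
by rewrite -{1}E; apply: klmix_shrinkl => //; apply/andP; split; lra.
Qed.

End Mixtures.

Section DriftConstant.
Variable R : realType.
Variable p : R -> R.
Hypothesis p_half : 0 < p 2^-1 < 2^-1.
Local Notation A := (p 2^-1).

Lemma fKE rho : fK p rho = rho * klmix A 1 (3/4).
Proof. by rewrite /fK /klmix mixp1. Qed.

Lemma gKE rho : gK p rho = (2^-1 - rho) * klmix A (1 - 4 * rho) (2^-1 + rho).
Proof. by []. Qed.

Lemma noise_half01 : 0 < A < 1.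
Proof. by have /andP[A0 A2] := p_half; apply/andP; split; lra. Qed.

Lemma Kd_le_f : Kd p <= 4^-1 * klmix A 1 (3/4).
Proof.
rewrite /Kd ge_min; apply/orP; right; rewrite ge_min; apply/orP; left.
apply: ge_inf; last by exists 4^-1; [apply/andP; split; lra | rewrite fKE].
exists 0 => _ [rho /andP[r0 _] ->]; rewrite fKE; apply: mulr_ge0; first lra.
by apply: klmix_ge0 noise_half01 _ _; apply/andP; split; lra.
Qed.

Lemma Kd_le_mix_quarter : Kd p <= 4^-1 * klmix A 4^-1 0.
Proof. by rewrite /Kd /klmix mixp0 ge_min; apply/orP; right; rewrite ge_min lexx orbT. Qed.

Lemma gK_ge rho : 0 <= rho <= 1/20 -> 9/20 * klmix A (4/5) (11/20) <= gK p rho.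
Proof.
move=> /andP[r0 r1]; have hA := noise_half01.
have shrink_left : klmix A (4/5) (11/20) <= klmix A (1 - 4 * rho) (11/20).
  set th := (4/5 - 11/20) / (1 - 4 * rho - 11/20).
  have E : th * (1 - 4 * rho) + (1 - th) * (11/20) = 4/5 by rewrite /th; field; lra.
  have ht : 0 <= th <= 1.
    by apply/andP; split; [apply: divr_ge0 | rewrite /th ler_pdivrMr]; lra.
  by rewrite -E; apply: klmix_shrinkl => //; apply/andP; split; lra.
have shrink_right : klmix A (1 - 4 * rho) (11/20) <= klmix A (1 - 4 * rho) (2^-1 + rho).
  set th := (1/20 - rho) / (1 - 4 * rho - (2^-1 + rho)).
  have E : th * (1 - 4 * rho) + (1 - th) * (2^-1 + rho) = 11/20 by rewrite /th; field; lra.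
  have ht : 0 <= th <= 1.
    by apply/andP; split; [apply: divr_ge0 | rewrite /th ler_pdivrMr]; lra.
  by rewrite -E; apply: klmix_shrinkr => //; apply/andP; split; lra.
have : 0 <= klmix A (4/5) (11/20) by apply: klmix_ge0 => //; apply/andP; split; lra.
rewrite gKE; nra.
Qed.

(* On [0, 1/4], f takes care of rho >= 1/20 and g of rho <= 1/20. *)
Lemma Kd_gt0 : 0 < Kd p.
Proof.
have hA := noise_half01.
have c0 : 0 < klmix A 1 (3/4).
  by apply: klmix_gt0 => //; try (apply/andP; split; lra); apply/eqP; lra.
have g0 : 0 < klmix A (4/5) (11/20).
  by apply: klmix_gt0 => //; try (apply/andP; split; lra); apply/eqP; lra.
have T0 : 0 < klmix A 4^-1 0.
  by apply: klmix_gt0 => //; try (apply/andP; split; lra); apply/eqP; lra.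
rewrite /klmix mixp0 in T0.
rewrite /Kd !lt_min; apply/and3P; split; last by apply: mulr_gt0 => //; rewrite invr_gt0.
- set m := Num.min (klmix A 1 (3/4) / 20) (9/20 * klmix A (4/5) (11/20)).
  have m0 : 0 < m by rewrite /m lt_min; apply/andP; split; [apply: divr_gt0 | apply: mulr_gt0]; lra.
  have m_f : m <= klmix A 1 (3/4) / 20 by rewrite /m ge_min lexx.
  have m_g : m <= 9/20 * klmix A (4/5) (11/20) by rewrite /m ge_min lexx orbT.
  apply: (lt_le_trans m0); apply: lb_le_inf.
    by exists (Num.max (fK p 0) (gK p 0)); exists 0; [apply/andP; split; lra |].
  move=> _ [rho /andP[r0 r1] ->]; rewrite le_max.
  case: (lerP (1/20) rho) => hr; apply/orP; [left | right].
    by apply: (le_trans m_f); rewrite fKE; nra.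
  by apply: (le_trans m_g); apply: gK_ge; apply/andP; split; lra.
- apply: (@lt_le_trans _ _ (4^-1 * klmix A 1 (3/4))).
    by apply: mulr_gt0; rewrite ?invr_gt0.
  apply: lb_le_inf; first by exists (fK p 4^-1); exists 4^-1; [apply/andP; split; lra |].
  by move=> _ [rho /andP[r0 r1] ->]; rewrite fKE ler_wpM2r // ltW.
Qed.

End DriftConstant.

Section BayesStep.
Variable R : realType.
Implicit Types w P b al be : R.

Definition xlogit w : R := w * ln (w / (1 - w)).

Lemma UnestE L l (pi : nat -> R) :
  Unest L l pi = \sum_(0 <= q < 2 ^ l) xlogit (binmass L pi l q).
Proof. by []. Qed.

Lemma mul_xlogit_div w P : 0 < w < P -> P * xlogit (w / P) = w * ln (w / (P - w)).
Proof.
move=> /andP[w0 wP]; have P0 : P != 0 by rewrite gt_eqF //; lra.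
rewrite /xlogit (_ : w / P / (1 - w / P) = w / (P - w)); first by field.
by field; rewrite subr_eq0 P0 gt_eqF.
Qed.

(* Bayes step on a two-set partition: a set of prior mass b whose observation law is
   Bern(al), against Bern(be) for its complement. *)
Lemma xlogit_bayes b al be : 0 < b < 1 -> 0 < al < 1 -> 0 < be < 1 ->
  let P := b * al + (1 - b) * be in
  P * xlogit (b * al / P) + (1 - P) * xlogit (b * (1 - al) / (1 - P)) - xlogit b
  = b * klB al be.
Proof.
move=> /andP[b0 b1] /andP[al0 al1] /andP[be0 be1] P.
have [al' be'] : 0 < 1 - al /\ 0 < 1 - be by split; lra.
have b' : 0 < 1 - b by lra.
have w1 : 0 < b * al < P by rewrite /P; apply/andP; split; nra.
have w2 : 0 < b * (1 - al) < 1 - P by rewrite /P; apply/andP; split; nra.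
rewrite !mul_xlogit_div //.
have -> : P - b * al = (1 - b) * be by rewrite /P; ring.
have -> : 1 - P - b * (1 - al) = (1 - b) * (1 - be) by rewrite /P; ring.
have lnS x y : 0 < x -> 0 < y -> ln (b * x / ((1 - b) * y)) = ln (b / (1 - b)) + ln (x / y).
  move=> x0 y0; rewrite -lnM ?posrE ?divr_gt0 //; congr ln.
  by field; rewrite !gt_eqF.
by rewrite !lnS // /xlogit /klB; ring.
Qed.

End BayesStep.

Lemma exists_argmax (R : realType) (f : nat -> R) n : (0 < n)%N ->
  exists2 m, (m < n)%N & forall m', (m' < n)%N -> f m' <= f m.
Proof.
case: n => // n _.
have [m _ Hm] := @arg_maxP _ _ _ (@ord0 n) xpredT (fun i : 'I_n.+1 => f i) isT.
by exists m => // m' hm'; apply: (Hm (Ordinal hm')).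
Qed.

Lemma find_iota_spec (P : pred nat) s n m : (m < n)%N -> P (s + m)%N ->
  (find P (iota s n) < n)%N /\ P (s + find P (iota s n))%N.
Proof.
move=> mn Pm.
have hP : has P (iota s n) by apply/hasP; exists (s + m)%N => //; rewrite mem_iota; lia.
have lt_n : (find P (iota s n) < n)%N by move: hP; rewrite has_find size_iota.
by split => //; have := nth_find 0%N hP; rewrite nth_iota.
Qed.

Lemma sumr_nat_ge_term (R : realType) (F : nat -> R) m n i : (m <= i < n)%N ->
  (forall j, (m <= j < n)%N -> 0 <= F j) -> F i <= \sum_(m <= j < n) F j.
Proof.
move=> hi F_ge0; rewrite (bigD1_seq i) ?mem_index_iota ?iota_uniq //= lerDl.
by rewrite big_seq_cond sumr_ge0 // => j /andP[]; rewrite mem_index_iota => /F_ge0.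
Qed.

Definition pos_distr (R : realType) L (pi : nat -> R) :=
  (forall i, (i < NN L)%N -> 0 < pi i) /\ mass pi 0 (NN L) = 1.

Section DyadicQuery.
Variable R : realType.
Variable L : nat.
Variable pi : nat -> R.
Hypothesis pi_gt0 : forall i, (i < NN L)%N -> 0 < pi i.
Hypothesis pi_sum1 : mass pi 0 (NN L) = 1.
Local Notation N := (NN L).

Lemma mass_cat a b c : (a <= b <= c)%N -> mass pi a c = mass pi a b + mass pi b c.
Proof. by move=> /andP[ab bc]; rewrite /mass (big_cat_nat ab bc). Qed.

Lemma mass_nil a : mass pi a a = 0.
Proof. by rewrite /mass big_geq. Qed.

Lemma mass_nat1 i : mass pi i i.+1 = pi i.
Proof. by rewrite /mass big_nat1. Qed.

Lemma mass_ge0 a b : (b <= N)%N -> 0 <= mass pi a b.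
Proof.
move=> bN; rewrite /mass big_nat_cond sumr_ge0 // => i /andP[/andP[_ hi] _].
by rewrite ltW // pi_gt0 //; lia.
Qed.

Lemma mass_gt0 a b : (a < b <= N)%N -> 0 < mass pi a b.
Proof.
move=> /andP[ab bN]; rewrite /mass big_ltn // ltr_wpDr ?mass_ge0 //.
by apply: pi_gt0; lia.
Qed.

Lemma mass_le_extend a b c : (a <= b <= c)%N -> (c <= N)%N -> mass pi a b <= mass pi a c.
Proof. by move=> h cN; rewrite (mass_cat h) lerDl mass_ge0. Qed.

Lemma mass_lt_extend a b c : (a <= b)%N -> (b < c)%N -> (c <= N)%N ->
  mass pi a b < mass pi a c.
Proof.
move=> ab bc cN; rewrite (@mass_cat a b c) ?ab ?(ltnW bc) // ltrDl.
by apply: mass_gt0; lia.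
Qed.

Lemma mass_le1 a b : (a <= b <= N)%N -> mass pi a b <= 1.
Proof.
move=> /andP[ab bN]; rewrite -pi_sum1 (@mass_cat 0 a N) ?(@mass_cat a b N) ?ab ?bN //; last lia.
have := @mass_ge0 0 a ltac:(lia); have := @mass_ge0 b N (leqnn _); lra.
Qed.

Lemma NN_split l : (l <= L)%N -> N = (2 ^ l * 2 ^ (L - l))%N.
Proof. by move=> lL; rewrite /NN -expnD subnKC. Qed.

Definition heavy_level (l : 'I_L.+1) := [exists m : 'I_(2 ^ l), 2^-1 <= massH L pi l m].

Lemma heavy_level0 : heavy_level ord0.
Proof.
apply/existsP; exists (Ordinal (expn_gt0 2 0)).
by rewrite /massH /= mul0n subn0 mul1n pi_sum1; lra.
Qed.

Lemma lstar_ge l m : (l <= L)%N -> (m < 2 ^ l)%N -> 2^-1 <= massH L pi l m ->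
  (l <= lstar L pi)%N.
Proof.
move=> lL ml H; have Hl : (l < L.+1)%N by lia.
apply: (@leq_bigmax_cond _ heavy_level (fun i => nat_of_ord i) (Ordinal Hl)).
by apply/existsP; exists (Ordinal ml).
Qed.

Lemma lstar_spec : (lstar L pi <= L)%N /\
  exists2 m, (m < 2 ^ lstar L pi)%N & 2^-1 <= massH L pi (lstar L pi) m.
Proof.
rewrite /lstar -/(heavy_level _) (bigop.bigmax_eq_arg _ heavy_level0).
case: (arg_maxnP _ heavy_level0) => /= i /existsP[m Hm] _.
by split; [have := ltn_ord i; lia | exists m].
Qed.

Local Notation ls := (lstar L pi).
Local Notation ms := (mstar L pi).
Local Notation d := (dstart L pi).
Local Notation k := (kstar L pi).
Local Notation e := (2 ^ (L - lstar L pi))%N.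

Lemma lstar_le : (ls <= L)%N.
Proof. by case: lstar_spec. Qed.

Lemma lstar_gt0 : (0 < L)%N -> (0 < ls)%N.
Proof.
move=> L0; have hN : N = (2 * 2 ^ (L - 1))%N by rewrite (NN_split L0).
have halves : massH L pi 1 0 + massH L pi 1 1 = 1.
  by rewrite /massH mul0n mul1n -pi_sum1 hN -(@mass_cat 0) //; apply/andP; split; lia.
case: (lerP 2^-1 (massH L pi 1 0)) => H; first exact: (@lstar_ge 1 0).
by apply: (@lstar_ge 1 1) => //; lra.
Qed.

Lemma mstar_spec : (ms < 2 ^ ls)%N /\ 2^-1 <= massH L pi ls ms.
Proof.
pose heaviest m := [forall m' : 'I_(2 ^ ls), massH L pi ls m' <= massH L pi ls m].
have [m0 hm0 Hm0] := exists_argmax (fun m => massH L pi ls m) (expn_gt0 2 ls).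
have [ms_lt /forallP ms_max] : (ms < 2 ^ ls)%N /\ heaviest ms.
  by apply: (@find_iota_spec heaviest 0 _ m0) => //; apply/forallP => m'; apply: Hm0.
split => //; case: lstar_spec => _ [m hm Hm].
exact: le_trans Hm (ms_max (Ordinal hm)).
Qed.

Lemma block_size_gt0 : (0 < e)%N.
Proof. by rewrite expn_gt0. Qed.

Lemma block_le_N : (d + e <= N)%N.
Proof.
have [ms_lt _] := mstar_spec.
rewrite /dstart (NN_split lstar_le) -mulSnr.
by rewrite leq_mul2r ms_lt orbT.
Qed.

Lemma block_mass_ge : 2^-1 <= mass pi d (d + e).
Proof. by have [_] := mstar_spec; rewrite /massH /dstart mulSnr addnC. Qed.

Definition half_gap (j : nat) : R := `|mass pi d j.+1 - 2^-1|.

Lemma kstar_spec : [/\ (d <= k)%N, (k < N)%N &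
  forall k', (d <= k')%N -> (k' < N)%N -> half_gap k <= half_gap k'].
Proof.
have dN : (d < N)%N by have := block_le_N; have := block_size_gt0; lia.
pose closest j := [forall k' : 'I_N, (d <= k')%N ==> (half_gap j <= half_gap k')].
have [j0 hj0 Hj0] := @exists_argmax R (fun j => - half_gap (d + j)) (N - d) ltac:(lia).
have [k_lt /forallP k_min] : (k - d < N - d)%N /\ closest k.
  have := @find_iota_spec closest d _ _ hj0; rewrite /kstar addKn.
  apply=> //; apply/forallP => k'; apply/implyP => dk.
  have := Hj0 (k' - d)%N ltac:(have := ltn_ord k'; lia).
  by rewrite subnKC // lerN2.
split; [rewrite /kstar; lia | lia |].
by move=> k' dk kN; have /implyP := k_min (Ordinal kN); apply.
Qed.

Lemma pi_lt_half : (ls < L)%N -> forall i, (i < N)%N -> pi i < 2^-1.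
Proof.
move=> lsL i iN; rewrite ltNge; apply/negP => H.
have := @lstar_ge L i (leqnn L) iN.
by rewrite /massH subnn expn0 !muln1 mass_nat1 => /(_ H); lia.
Qed.

Lemma kstar_lt_block : (k < d + e)%N.
Proof.
case: kstar_spec => dk kN k_min; have e0 := block_size_gt0.
rewrite ltnNge; apply/negP => H.
have h1 := block_mass_ge.
have h2 : mass pi d (d + e) < mass pi d k.+1 by apply: mass_lt_extend; lia.
have := k_min (d + e - 1)%N ltac:(lia) ltac:(have := block_le_N; lia).
rewrite /half_gap (_ : (d + e - 1).+1 = (d + e)%N); last by lia.
by rewrite !ger0_norm; lra.
Qed.

Local Notation X := (mass pi d k.+1).

Lemma massS_ge : 4^-1 <= X.
Proof.
case: kstar_spec => dk kN k_min.
case: (ltnP ls L) => lsL; last first.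
  have ls_L : ls = L by have := lstar_le; lia.
  have k_d : k = d by have := kstar_lt_block; rewrite ls_L subnn expn0; lia.
  by have := block_mass_ge; rewrite ls_L subnn expn0 -k_d addn1; lra.
rewrite leNgt; apply/negP => H.
have k1 : (k.+1 < d + e)%N.
  rewrite ltnNge; apply/negP => H2.
  have := @mass_le_extend d (d + e) k.+1 ltac:(lia) ltac:(lia).
  have := block_mass_ge; lra.
have k1N : (k.+1 < N)%N by have := block_le_N; lia.
have := k_min k.+1 ltac:(lia) k1N.
have h1 := pi_lt_half lsL k1N; have h2 := pi_gt0 k1N.
have := k_min k.+1 ltac:(lia) k1N.
rewrite /half_gap (@mass_cat d k.+1 k.+2) ?mass_nat1; last lia.
rewrite (ltr0_norm (x := X - 2^-1)); last lra.
have : `|X + pi k.+1 - 2^-1| < - (X - 2^-1) by rewrite ltr_norml; apply/andP; split; lra.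
lra.
Qed.

Lemma massS_le : (ls < L)%N -> X <= 3/4.
Proof.
move=> lsL; case: kstar_spec => dk kN k_min.
rewrite leNgt; apply/negP => H.
have h1 := pi_lt_half lsL kN; have h2 := pi_gt0 kN.
have [k_d|k_neq_d] := eqVneq k d; first by move: H h1; rewrite k_d mass_nat1; lra.
have := k_min k.-1 ltac:(lia) ltac:(lia).
rewrite /half_gap (_ : k.-1.+1 = k); last by lia.
rewrite (@mass_cat d k k.+1) ?mass_nat1 in H *; last lia.
rewrite [Y in Y <= _]ger0_norm; last lra.
have : `|mass pi d k - 2^-1| < mass pi d k + pi k - 2^-1.
  by rewrite ltr_norml; apply/andP; split; lra.
lra.
Qed.

Lemma massS_le1 : X <= 1.
Proof. by case: kstar_spec => dk kN _; apply: mass_le1; lia. Qed.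

Lemma query_size_bounds : (0 < L)%N -> 0 < delta R L * (sizeS L pi)%:R <= 2^-1.
Proof.
move=> L0; case: kstar_spec => dk kN _; have := kstar_lt_block.
have two_e : (2 * e <= N)%N.
  rewrite (NN_split lstar_le) leq_mul2r; apply/orP; right.
  by apply: (@leq_trans (2 ^ 1)) => //; rewrite leq_exp2l // lstar_gt0.
rewrite /sizeS => k_lt; have S0 : (0 < k.+1 - d)%N by lia.
have S2 : (2 * (k.+1 - d) <= N)%N by lia.
have N0 : (0 : R) < N%:R by rewrite ltr0n /NN expn_gt0.
rewrite /delta; apply/andP; split; first by apply: mulr_gt0; rewrite ?invr_gt0 // ltr0n.
rewrite mulrC ler_pdivrMr // -[Y in _ <= Y]mulr1.
by move: S2; rewrite -(ler_nat R) natrM; lra.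
Qed.

Section Likelihood.
Variable p : R -> R.
Hypothesis p_range : forall x : R, 0 < x < 1 -> 0 < p x < 2^-1.
Hypothesis p_mono : forall x y : R, 0 < x -> x <= y -> y < 1 -> p x <= p y.
Hypothesis L_gt0 : (0 < L)%N.
Local Notation a := (p (delta R L * (sizeS L pi)%:R)).

Lemma noise_half_bounds : 0 < p 2^-1 < 2^-1.
Proof. by apply: p_range; apply/andP; split; lra. Qed.

Lemma noise01 : 0 < a < 1.
Proof.
have /andP[s0 s2] := query_size_bounds L_gt0.
have /andP[a0 a2] : 0 < a < 2^-1 by apply: p_range; apply/andP; split; lra.
by apply/andP; split; lra.
Qed.

Lemma noise_gt0 : 0 < a.
Proof. by case/andP: noise01. Qed.

Lemma noise_le_half : a <= p 2^-1.
Proof. by have /andP[s0 s2] := query_size_bounds L_gt0; apply: p_mono => //; lra. Qed.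

Definition smass lo hi := \sum_(lo <= i < hi | inS L pi i) pi i.
Definition jmass y lo hi := \sum_(lo <= i < hi) pi i * lik p L pi y i.

Lemma mass_splitS lo hi :
  mass pi lo hi = smass lo hi + \sum_(lo <= i < hi | ~~ inS L pi i) pi i.
Proof. by rewrite /mass (bigID (inS L pi)). Qed.

Lemma jmass_true lo hi :
  jmass true lo hi = (1 - a) * smass lo hi + a * (mass pi lo hi - smass lo hi).
Proof.
rewrite mass_splitS addrAC subrr add0r /jmass (bigID (inS L pi)) /= /smass !mulr_sumr.
congr (_ + _); apply: eq_bigr => i Si; rewrite /lik.
  by rewrite Si eqxx mulrC.
by rewrite (negbTE Si) mulrC.
Qed.

Lemma jmass_false lo hi : jmass false lo hi = mass pi lo hi - jmass true lo hi.
Proof.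
rewrite /jmass /mass -sumrB; apply: eq_bigr => i _; rewrite /lik.
by case: (inS L pi i) => /=; ring.
Qed.

Lemma smass_ge0 lo hi : (hi <= N)%N -> 0 <= smass lo hi.
Proof.
move=> hN; rewrite /smass big_mkcond big_nat_cond sumr_ge0 // => i /andP[/andP[_ hi'] _].
by case: ifP => // _; rewrite ltW // pi_gt0 //; lia.
Qed.

Lemma smass_le_mass lo hi : (hi <= N)%N -> smass lo hi <= mass pi lo hi.
Proof.
move=> hN; rewrite mass_splitS lerDl big_mkcond big_nat_cond sumr_ge0 //.
by move=> i /andP[/andP[_ hi'] _]; case: ifP => // _; rewrite ltW // pi_gt0 //; lia.
Qed.

Lemma smass_cat lo mid hi : (lo <= mid <= hi)%N -> smass lo hi = smass lo mid + smass mid hi.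
Proof. by move=> /andP[lm mh]; rewrite /smass (big_cat_nat lm mh). Qed.

Lemma smass_all lo hi : (forall i, (lo <= i < hi)%N -> inS L pi i) ->
  smass lo hi = mass pi lo hi.
Proof. by move=> S_all; rewrite /smass /mass big_mkcond; apply: eq_big_nat => i /S_all ->. Qed.

Lemma smass_none lo hi : (forall i, (lo <= i < hi)%N -> ~~ inS L pi i) -> smass lo hi = 0.
Proof.
move=> S_none; rewrite /smass big_nat_cond big1 // => i /andP[/S_none].
by move/negbTE ->.
Qed.

Lemma smass_window lo hi : (lo <= d)%N -> (k < hi)%N -> (hi <= N)%N -> smass lo hi = X.
Proof.
move=> lo_d k_hi hN; case: (kstar_spec) => dk kN _.
rewrite (@smass_cat lo d hi) ?(@smass_cat d k.+1 hi); try (apply/andP; split; lia).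
rewrite smass_none ?add0r; last by move=> i hi'; rewrite /inS; lia.
rewrite (@smass_none k.+1) ?addr0; last by move=> i hi'; rewrite /inS; lia.
by rewrite smass_all // => i hi'; rewrite /inS; lia.
Qed.

Lemma smass_total : smass 0 N = X.
Proof. by case: kstar_spec => _ kN _; apply: smass_window. Qed.

Lemma predY_true : predY p L pi true = mixp a X.
Proof.
rewrite -[predY _ _ _ _]/(jmass true 0 N) jmass_true pi_sum1 smass_total /mixp; ring.
Qed.

Lemma predY_false : predY p L pi false = 1 - mixp a X.
Proof.
by rewrite -[predY _ _ _ _]/(jmass false 0 N) jmass_false pi_sum1 -predY_true.
Qed.

Lemma predY_gt0 y : 0 < predY p L pi y.
Proof.
have X01 : 0 <= X <= 1 by rewrite massS_le1 andbT; have := massS_ge; lra.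
have /andP[m0 m1] := mixp_bounds noise01 X01.
by case: y; rewrite ?predY_true ?predY_false; lra.
Qed.

Lemma update_pos_distr y : pos_distr L (update p L pi y).
Proof.
have P0 := predY_gt0 y; split.
  move=> i iN; rewrite /update divr_gt0 // mulr_gt0 ?pi_gt0 //.
  by have /andP[a0 a1] := noise01; rewrite /lik; case: ifP => _; lra.
by rewrite /mass /update -mulr_suml divff // gt_eqF.
Qed.

Section Level.
Variable l : nat.
Hypothesis l_gt0 : (0 < l)%N.
Hypothesis l_lt_L : (l < L)%N.
Local Notation B := (2 ^ (L - l))%N.

Lemma N_bins : N = (2 ^ l * B)%N.
Proof. by apply: NN_split; lia. Qed.

Lemma bin_le_N q : (q < 2 ^ l)%N -> (q.+1 * B <= N)%N.
Proof. by move=> hq; rewrite N_bins leq_mul2r hq orbT. Qed.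

Lemma sum_bins n : \sum_(0 <= q < n) massH L pi l q = mass pi 0 (n * B).
Proof.
elim: n => [|n IH]; first by rewrite big_geq // mass_nil.
rewrite big_nat_recr //= IH /massH (@mass_cat 0 (n * B) (n.+1 * B)) //.
by rewrite leq_mul2r leqnSn orbT.
Qed.

Lemma sum_massH : \sum_(0 <= q < 2 ^ l) massH L pi l q = 1.
Proof. by rewrite sum_bins -N_bins. Qed.

(* Here [0 < l] is needed: at level 0 the only bin is everything. *)
Lemma bin_compl_mass_gt0 q : (q < 2 ^ l)%N -> 0 < mass pi 0 (q * B) + mass pi (q.+1 * B) N.
Proof.
move=> hq; have hiN := bin_le_N hq; have B0 : (0 < B)%N by rewrite expn_gt0.
have B_lt_N : (B < N)%N by rewrite /NN ltn_exp2l //; lia.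
have := mass_ge0 0 (b := q * B) ltac:(lia); have := mass_ge0 (q.+1 * B) (leqnn N).
case: (posnP q) => [q0|q_gt0].
  have : 0 < mass pi (q.+1 * B) N by apply: mass_gt0; rewrite q0 mul1n B_lt_N /=.
  lra.
have : 0 < mass pi 0 (q * B) by apply: mass_gt0; rewrite muln_gt0 q_gt0 B0 /=; lia.
lra.
Qed.

Lemma bin_mass_bounds q : (q < 2 ^ l)%N ->
  let b := massH L pi l q in let u := smass (q * B) (q.+1 * B) in
  [/\ 0 < b < 1, 0 <= u <= b, u <= X & X - u <= 1 - b].
Proof.
move=> hq b u; have hiN := bin_le_N hq; have loN : (q * B <= N)%N by lia.
have Xu : X = smass 0 (q * B) + u + smass (q.+1 * B) N.
  rewrite -smass_total (@smass_cat 0 (q * B) N) ?(@smass_cat (q * B) (q.+1 * B) N) ?addrA //;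
  by apply/andP; split; lia.
have one_b : 1 = mass pi 0 (q * B) + b + mass pi (q.+1 * B) N.
  rewrite -pi_sum1 /b /massH (@mass_cat 0 (q * B) N) ?(@mass_cat (q * B) (q.+1 * B) N) ?addrA //;
  by apply/andP; split; lia.
have := smass_ge0 0 loN; have := smass_ge0 (q.+1 * B) (leqnn N).
have := smass_le_mass 0 loN; have := smass_le_mass (q.+1 * B) (leqnn N).
have u0 : 0 <= u := smass_ge0 (q * B) hiN.
have ub : u <= b := smass_le_mass (q * B) hiN.
have b0 : 0 < b.
  by apply: mass_gt0; rewrite hiN ltn_mul2r ltnSn expn_gt0.
have := bin_compl_mass_gt0 hq.
by move=> *; split; try (apply/andP; split); lra.
Qed.

Definition bin_drift q :=
  let b := massH L pi l q in let u := smass (q * B) (q.+1 * B) in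
  b * klmix a (u / b) ((X - u) / (1 - b)).

Lemma massH_update y q :
  massH L (update p L pi y) l q = jmass y (q * B) (q.+1 * B) / predY p L pi y.
Proof. by rewrite /massH /mass /update /jmass -mulr_suml. Qed.

Lemma drift_eq : EnextU p L l pi - Unest L l pi = \sum_(0 <= q < 2 ^ l) bin_drift q.
Proof.
rewrite /EnextU big_bool UnestE !mulr_sumr -big_split -sumrB /=.
apply: eq_big_nat => q /andP[_ hq].
rewrite /binmass !massH_update jmass_false jmass_true predY_false predY_true.
rewrite -/(massH L pi l q) /bin_drift /klmix.
set b := massH L pi l q; set u := smass (q * B) (q.+1 * B).
have [hb /andP[u0 ub] huX hXu] : [/\ 0 < b < 1, 0 <= u <= b, u <= X & X - u <= 1 - b].
  exact: bin_mass_bounds.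
have /andP[b0 b1] := hb.
have s01 : 0 <= u / b <= 1 by apply/andP; split; [apply: divr_ge0 | rewrite ler_pdivrMr]; lra.
have t01 : 0 <= (X - u) / (1 - b) <= 1.
  by apply/andP; split; [apply: divr_ge0 | rewrite ler_pdivrMr]; lra.
have hal := mixp_bounds noise01 s01; have hbe := mixp_bounds noise01 t01.
set al := mixp a (u / b); set be := mixp a ((X - u) / (1 - b)).
have E1 : (1 - a) * u + a * (b - u) = b * al by rewrite /al /mixp; field; lra.
have E2 : mixp a X = b * al + (1 - b) * be.
  by rewrite /al /be /mixp; field; apply/andP; split; lra.
rewrite E1 E2 (_ : b - b * al = b * (1 - al)); last by ring.
exact: xlogit_bayes.
Qed.

Lemma bin_drift_ge0 q : (q < 2 ^ l)%N -> 0 <= bin_drift q.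
Proof.
move=> hq; have [/andP[b0 b1] /andP[u0 ub] huX hXu] := bin_mass_bounds hq.
rewrite /bin_drift /= mulr_ge0 //; first lra.
apply: klmix_ge0 noise01 _ _; apply/andP; split.
- by apply: divr_ge0; lra.
- by rewrite ler_pdivrMr //; lra.
- by apply: divr_ge0; lra.
- by rewrite ler_pdivrMr; lra.
Qed.

Local Notation ls := (lstar L pi).
Local Notation ms := (mstar L pi).
Local Notation e := (2 ^ (L - lstar L pi))%N.

Lemma block_in_bin : (l <= ls)%N ->
  exists2 Q, (Q < 2 ^ l)%N & (Q * B <= d)%N && (d + e <= Q.+1 * B)%N.
Proof.
move=> lls; have [ms_lt _] := mstar_spec.
set f := (2 ^ (ls - l))%N.
have f0 : (0 < f)%N by rewrite expn_gt0.
have hB : B = (f * e)%N by rewrite -expnD; congr expn; have := lstar_le; lia.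
exists (ms %/ f)%N.
  by rewrite ltn_divLR // /f -expnD subnKC.
rewrite /dstart hB !mulnA -mulSnr !leq_mul2r; apply/andP; split; apply/orP; right.
  exact: leq_divM.
exact: ltn_ceil.
Qed.

Lemma bin_drift_block Q : (Q < 2 ^ l)%N -> (Q * B <= d)%N -> (d + e <= Q.+1 * B)%N ->
  4^-1 * klmix (p 2^-1) 4^-1 0 <= bin_drift Q.
Proof.
move=> hQ lo_d de_hi; have [/andP[b0 b1] /andP[u0 ub] _ _] := bin_mass_bounds hQ.
have e0 := block_size_gt0; have hiN := bin_le_N hQ.
have uX : smass (Q * B) (Q.+1 * B) = X.
  by apply: smass_window => //; have := kstar_lt_block; lia.
rewrite uX in ub.
have b_half : 2^-1 <= massH L pi l Q.
  rewrite /massH (@mass_cat (Q * B) d) ?(@mass_cat d (d + e) (Q.+1 * B));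
    try (apply/andP; split; lia).
  have := block_mass_ge; have := mass_ge0 (Q * B) (b := d) ltac:(lia).
  by have := mass_ge0 (d + e) hiN; lra.
have X4 := massS_ge; have /andP[A0 A2] := noise_half_bounds.
have T_le : klmix (p 2^-1) 4^-1 0 <= klmix a (X / massH L pi l Q) 0.
  apply: klmix_r0_ge noise_gt0 noise_le_half A2 _.
  by apply/andP; split; rewrite ?ler_pdivlMr ?ler_pdivrMr //; lra.
have T0 : 0 <= klmix (p 2^-1) 4^-1 0 by apply: klmix_ge0; try (apply/andP; split); lra.
rewrite /bin_drift /= uX subrr mul0r.
by apply: le_trans (ler_wpM2l (ltW b0) T_le); apply: ler_wpM2r => //; lra.
Qed.

Lemma drift_ge_mix_quarter : (l <= ls)%N ->
  4^-1 * klmix (p 2^-1) 4^-1 0 <= \sum_(0 <= q < 2 ^ l) bin_drift q.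
Proof.
move=> lls; have [Q hQ /andP[lo_d de_hi]] := block_in_bin lls.
apply: le_trans (bin_drift_block hQ lo_d de_hi) _.
by apply: sumr_nat_ge_term => [|j /andP[_]]; [rewrite hQ | exact: bin_drift_ge0].
Qed.

(* Above level [ls] the query starts on a bin boundary, so only the bin of [k] is split. *)
Lemma bin_inside_or_outside q : (ls < l)%N -> q != (k %/ B)%N ->
  (forall i, (q * B <= i < q.+1 * B)%N -> inS L pi i) \/
  (forall i, (q * B <= i < q.+1 * B)%N -> ~~ inS L pi i).
Proof.
move=> lsl; set g := (2 ^ (l - ls))%N.
have B0 : (0 < B)%N by rewrite expn_gt0.
have he : e = (g * B)%N by rewrite -expnD; congr expn; lia.
have hd : d = (ms * g * B)%N by rewrite /dstart he mulnA.
have k_hi := ltn_ceil k B0; have k_lo := leq_divM k B.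
move: (k %/ B)%N k_hi k_lo => P k_hi k_lo q_neq.
rewrite /inS hd; case: (ltnP q P) => q_P.
  have qP : (q.+1 * B <= P * B)%N by rewrite leq_mul2r q_P orbT.
  case: (leqP (ms * g) q) => q_d.
    have : (ms * g * B <= q * B)%N by rewrite leq_mul2r q_d orbT.
    by left => i /andP[? ?]; lia.
  have : (q.+1 * B <= ms * g * B)%N by rewrite leq_mul2r q_d orbT.
  by right => i /andP[? ?]; lia.
have P_q : (P < q)%N by rewrite ltn_neqAle eq_sym q_neq q_P.
have : (P.+1 * B <= q * B)%N by rewrite leq_mul2r P_q orbT.
by right => i /andP[? ?]; lia.
Qed.

Lemma bin_drift_inside q : (ls < l)%N -> (q < 2 ^ l)%N ->
  (forall i, (q * B <= i < q.+1 * B)%N -> inS L pi i) ->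
  massH L pi l q * klmix (p 2^-1) 1 (3/4) <= bin_drift q.
Proof.
move=> lsl hq S_all; have [/andP[b0 b1] /andP[u0 ub] huX hXu] := bin_mass_bounds hq.
have X34 := massS_le (ltn_trans lsl l_lt_L).
have /andP[_ A2] := noise_half_bounds.
have u_b : smass (q * B) (q.+1 * B) = massH L pi l q := smass_all S_all.
rewrite u_b in hXu.
rewrite /bin_drift /= u_b divff ?gt_eqF // ler_wpM2l //; first lra.
apply: klmix_1_ge noise_gt0 noise_le_half A2 _.
by apply/andP; split; [apply: divr_ge0 | rewrite ler_pdivrMr]; lra.
Qed.

Lemma bin_drift_outside q : (q < 2 ^ l)%N ->
  (forall i, (q * B <= i < q.+1 * B)%N -> ~~ inS L pi i) ->
  massH L pi l q * klmix (p 2^-1) 1 (3/4) <= bin_drift q.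
Proof.
move=> hq S_none; have [/andP[b0 b1] _ _ hXu] := bin_mass_bounds hq.
have X4 := massS_ge.
have /andP[_ A2] := noise_half_bounds.
rewrite /bin_drift /= smass_none // mul0r subr0 ler_wpM2l //; first lra.
rewrite smass_none // subr0 in hXu.
apply: klmix_0_ge noise_gt0 noise_le_half A2 _.
by apply/andP; split; rewrite ?ler_pdivlMr ?ler_pdivrMr; lra.
Qed.

Lemma drift_ge_f : (ls < l)%N ->
  4^-1 * klmix (p 2^-1) 1 (3/4) <= \sum_(0 <= q < 2 ^ l) bin_drift q.
Proof.
move=> lsl; set c := klmix (p 2^-1) 1 (3/4); set P := (k %/ B)%N.
have c0 : 0 <= c.
  by have /andP[A0 A2] := noise_half_bounds; apply: klmix_ge0; try (apply/andP; split); lra.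
have hP : (P < 2 ^ l)%N by rewrite ltn_divLR ?expn_gt0 // -N_bins; case: kstar_spec.
have bP : massH L pi l P < 2^-1.
  by rewrite ltNge; apply/negP => /(lstar_ge (ltnW l_lt_L) hP); rewrite leqNgt lsl.
have others : (\sum_(0 <= q < 2 ^ l | q != P) massH L pi l q) * c
    <= \sum_(0 <= q < 2 ^ l | q != P) bin_drift q.
  rewrite mulr_suml big_seq_cond [Y in _ <= Y]big_seq_cond; apply: ler_sum => q.
  rewrite mem_index_iota => /andP[/andP[_ hq] qP].
  by case: (bin_inside_or_outside lsl qP) => [/(bin_drift_inside lsl hq)|/(bin_drift_outside hq)].
have := sum_massH; have := bin_drift_ge0 hP.
rewrite !(bigD1_seq P) ?mem_index_iota ?iota_uniq ?hP //= => DP0 sum1.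
have : 4^-1 * c <= (\sum_(0 <= q < 2 ^ l | q != P) massH L pi l q) * c.
  by apply: ler_wpM2r => //; lra.
lra.
Qed.

Lemma drift_ge_Kd : Kd p <= EnextU p L l pi - Unest L l pi.
Proof.
rewrite drift_eq; case: (leqP l (lstar L pi)) => [lls|lsl].
  exact: le_trans (Kd_le_mix_quarter p) (drift_ge_mix_quarter lls).
exact: le_trans (Kd_le_f noise_half_bounds) (drift_ge_f lsl).
Qed.

End Level.

End Likelihood.
End DyadicQuery.

Lemma prior_pos_distr (R : realType) L : pos_distr L (prior R L).
Proof.
have N0 : (NN L)%:R != 0 :> R by rewrite pnatr_eq0 -lt0n expn_gt0.
split => [i _|]; first by rewrite /prior /delta invr_gt0 ltr0n expn_gt0.
by rewrite /mass /prior sumr_const_nat subn0 /delta -(mulr_natr (NN L)%:R^-1) mulVf.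
Qed.

Lemma posterior_pos_distr (R : realType) (p : R -> R) L :
  (forall x : R, 0 < x < 1 -> 0 < p x < 2^-1) -> (0 < L)%N ->
  forall ys, pos_distr L (posterior p L ys).
Proof.
move=> p_range L0 ys; rewrite /posterior.
elim: ys (prior R L) (prior_pos_distr R L) => [//|y ys IH] pi [pi_gt0 pi_sum1] /=.
by apply: IH; apply: update_pos_distr.
Qed.

Theorem lemma9 (R : realType) (p : R -> R)
  (p_range : forall x : R, 0 < x < 1 -> 0 < p x < 2^-1)
  (p_cont : forall x : R, 0 < x < 1 -> (p y @[y --> x] --> p x))
  (p_mono : forall x y : R, 0 < x -> x <= y -> y < 1 -> p x <= p y)
  (L l : nat) (hl0 : (0 < l)%N) (hlL : (l < L)%N) :
  0 < Kd p /\
  forall ys : seq bool, (0 < size ys)%N ->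
    EnextU p L l (posterior p L ys) - Unest L l (posterior p L ys) >= Kd p.
Proof.
have L0 : (0 < L)%N := ltn_trans hl0 hlL.
split; first by apply: Kd_gt0; apply: p_range; apply/andP; split; lra.
move=> ys _; have [pi_gt0 pi_sum1] := posterior_pos_distr p_range L0 ys.
exact: drift_ge_Kd.
Qed.
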